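(* Let $G$ be a group acting on a set $X$ and $Y$ a finite subset of $X$ such that $\mu=\inf_{A\in\mathcal{P}_{\mathrm{fin}}(G)\setminus\{\emptyset\}}\frac{|A\cdot Y|}{|A|}>0$. Then for any $\lambda\in\,]0,\mu]$ and any nonempty finite subset $A_0$ of $G$ there exists a subgroup $H$ of $G$ containing $G_Y$ such that \[\lambda\max_{A\subset G,\ A\cdot Y=A_0\cdot Y}|A|+|Y|\leq\lambda|H|+|A_0\cdot Y|.\]
   Context: $\mathcal{P}_{\mathrm{fin}}(G)$ is the set of finite subsets of $G$; $A\cdot Y=\{a\cdot y\mid a\in A,y\in Y\}$; $G_Y=\{g\in G\mid g\cdot Y=Y\}$. *)

From Stdlib Require Import Reals List.
From Coquelicot Require Import Coquelicot.
Import ListNotations.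
Open Scope R_scope.

Definition is_group {G : Type} (mul : G -> G -> G) (one : G) (inv : G -> G) : Prop :=
  (forall a b c, mul a (mul b c) = mul (mul a b) c) /\
  (forall a, mul one a = a) /\ (forall a, mul a one = a) /\
  (forall a, mul (inv a) a = one) /\ (forall a, mul a (inv a) = one).

Definition is_action {G X : Type} (mul : G -> G -> G) (one : G) (act : G -> X -> X) : Prop :=
  (forall x, act one x = x) /\ (forall g h x, act (mul g h) x = act g (act h x)).

Definition finite_pred {T : Type} (A : T -> Prop) : Prop :=
  exists l : list T, forall x, A x <-> In x l.

Definition setcard {T : Type} (A : T -> Prop) (n : nat) : Prop :=
  exists l : list T, NoDup l /\ (forall x, A x <-> In x l) /\ length l = n.

Definition nonempty {T : Type} (A : T -> Prop) : Prop := exists x, A x.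

Definition same_set {T : Type} (A B : T -> Prop) : Prop := forall x, A x <-> B x.

Definition setact {G X : Type} (act : G -> X -> X) (A : G -> Prop) (Y : X -> Prop) : X -> Prop :=
  fun x => exists a y, A a /\ Y y /\ x = act a y.

Definition setstab {G X : Type} (act : G -> X -> X) (Y : X -> Prop) : G -> Prop :=
  fun g => same_set (setact act (fun h => h = g) Y) Y.

Definition is_subgroup {G : Type} (mul : G -> G -> G) (one : G) (inv : G -> G)
  (H : G -> Prop) : Prop :=
  H one /\ (forall a b, H a -> H b -> H (mul a b)) /\ (forall a, H a -> H (inv a)).

Definition mu_inf {G X : Type} (act : G -> X -> X) (Y : X -> Prop) : Rbar :=
  Glb_Rbar (fun r => exists (A : G -> Prop) (n m : nat),
    nonempty A /\ setcard A n /\ setcard (setact act A Y) m /\ r = INR m / INR n).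

From Stdlib Require Import Reals List Lia Lra Arith Wf_nat ClassicalEpsilon Classical FinFun.
From Coquelicot Require Import Coquelicot.
Import ListNotations.

(* Hamidoune's isoperimetric method.  Replace [lam] by a rational [p/q <= lam]
   close enough to it that the nonnegative integers q|A.Y| - p|A| (A finite and
   nonempty) attain a least value [kappa].  The sets attaining it (fragments) are
   stable under left translation and, by submodularity of A |-> |A.Y|, under
   nonempty intersection; hence a fragment of least size containing 1 (an atom)
   is a subgroup H.  Adjoining the coset H g of some g with g.Y = Y leaves H.Y
   unchanged, so g lies in H.  Finally q|A.Y| - p|A| >= kappa = q|H.Y| - p|H|
   together with |H.Y| >= |Y| gives the inequality. *)

Section FiniteSets.
Context {T : Type}.
Implicit Types A B : T -> Prop.

Definition union A B : T -> Prop := fun x => A x \/ B x.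
Definition inter A B : T -> Prop := fun x => A x /\ B x.

Definition holdsb (P : T -> Prop) (x : T) : bool :=
  if excluded_middle_informative (P x) then true else false.

Lemma holdsbP P x : holdsb P x = true <-> P x.
Proof. unfold holdsb; destruct excluded_middle_informative; split; congruence. Qed.

(* Junk value: [card A = 0] when [A] is infinite. *)
Definition card A : nat :=
  match excluded_middle_informative (exists n, setcard A n) with
  | left H => proj1_sig (constructive_indefinite_description _ H)
  | right _ => 0
  end.

Lemma setcard_unique A n m : setcard A n -> setcard A m -> n = m.
Proof.
  intros [l [Nl [El <-]]] [l' [Nl' [El' <-]]].
  apply Nat.le_antisymm; apply NoDup_incl_length; auto; intros x Hx.
  - apply El', El, Hx.
  - apply El, El', Hx.
Qed.

Lemma finite_setcard A : finite_pred A -> exists n, setcard A n.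
Proof.
  intros [l Hl].
  set (l' := nodup (fun x y => excluded_middle_informative (x = y)) l).
  exists (length l'), l'; split; [apply NoDup_nodup | split; [|reflexivity]].
  intro x; unfold l'; rewrite nodup_In; apply Hl.
Qed.

Lemma setcard_finite A n : setcard A n -> finite_pred A.
Proof. intros [l [_ [El _]]]; exists l; exact El. Qed.

Lemma setcard_card A : finite_pred A -> setcard A (card A).
Proof.
  intro FA; unfold card; destruct excluded_middle_informative as [H|H].
  - destruct constructive_indefinite_description; assumption.
  - exfalso; apply H, finite_setcard, FA.
Qed.

Lemma card_setcard A n : setcard A n -> card A = n.
Proof. intro S; apply (setcard_unique A); [apply setcard_card, (setcard_finite _ _ S) | exact S]. Qed.

Lemma setcard_ext A B n : same_set A B -> setcard A n -> setcard B n.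
Proof.
  intros E [l [Nl [El Ll]]]; exists l; repeat split; auto; intro Hx.
  - apply El, E, Hx.
  - apply E, El, Hx.
Qed.

Lemma card_ext A B : same_set A B -> finite_pred A -> card A = card B.
Proof. intros E FA; symmetry; apply card_setcard, (setcard_ext A), setcard_card; auto. Qed.

Lemma finite_subset A B : finite_pred B -> (forall x, A x -> B x) -> finite_pred A.
Proof.
  intros [l Hl] S; exists (filter (holdsb A) l); intro x.
  rewrite filter_In, holdsbP; split; [intro Ax; split; auto; apply Hl, S, Ax | tauto].
Qed.

Lemma card_subset_le A B : finite_pred B -> (forall x, A x -> B x) -> (card A <= card B)%nat.
Proof.
  intros FB S.
  destruct (setcard_card A (finite_subset A B FB S)) as [la [Na [Ea <-]]].
  destruct (setcard_card B FB) as [lb [Nb [Eb <-]]].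
  apply NoDup_incl_length; auto; intros x Hx; apply Eb, S, Ea, Hx.
Qed.

Lemma subset_of_card_le A B : finite_pred B -> (forall x, A x -> B x) ->
  (card B <= card A)%nat -> forall x, B x -> A x.
Proof.
  intros FB S Le x Bx; apply NNPP; intro nAx.
  destruct (setcard_card A (finite_subset A B FB S)) as [la [Na [Ea La]]].
  destruct (setcard_card B FB) as [lb [Nb [Eb Lb]]].
  assert (length (x :: la) <= length lb)%nat; [|simpl in *; lia].
  apply NoDup_incl_length.
  - constructor; [rewrite <- Ea|]; assumption.
  - intros y [<-|Hy]; apply Eb; [assumption | apply S, Ea, Hy].
Qed.

Lemma card_pos_nonempty A : finite_pred A -> (0 < card A)%nat -> nonempty A.
Proof.
  intros FA Pos; destruct (setcard_card A FA) as [[|x l] [_ [El Ll]]]; simpl in Ll.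
  - lia.
  - exists x; apply El; left; reflexivity.
Qed.

Lemma card_nonempty_pos A : finite_pred A -> nonempty A -> (0 < card A)%nat.
Proof.
  intros FA [x Ax]; destruct (setcard_card A FA) as [[|y l] [_ [El Ll]]]; simpl in Ll.
  - apply El in Ax; destruct Ax.
  - lia.
Qed.

Lemma finite_union A B : finite_pred A -> finite_pred B -> finite_pred (union A B).
Proof.
  intros [la Ha] [lb Hb]; exists (la ++ lb); intro x.
  unfold union; rewrite in_app_iff, Ha, Hb; tauto.
Qed.

Lemma card_union_inter A B : finite_pred A -> finite_pred B ->
  (card (union A B) + card (inter A B) = card A + card B)%nat.
Proof.
  intros FA FB.
  destruct (setcard_card A FA) as [la [Na [Ea <-]]].
  destruct (setcard_card B FB) as [lb [Nb [Eb <-]]].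
  set (lb_out := filter (fun x => negb (holdsb A x)) lb).
  set (lb_in := filter (holdsb A) lb).
  rewrite (card_setcard (inter A B) (length lb_in)).
  rewrite (card_setcard (union A B) (length (la ++ lb_out))).
  - rewrite length_app, <- (filter_length (holdsb A) lb); fold lb_in lb_out; lia.
  - exists (la ++ lb_out); split; [|split; [|reflexivity]].
    + apply NoDup_app; [exact Na | apply NoDup_filter, Nb |].
      intros x Ia Io; apply filter_In in Io as [_ Io].
      apply Ea, holdsbP in Ia; rewrite Ia in Io; discriminate.
    + intro x; unfold union, lb_out; rewrite in_app_iff, filter_In, <- Ea, <- Eb.
      destruct (holdsb A x) eqn:E; simpl.
      * apply holdsbP in E; tauto.
      * assert (~ A x) by (rewrite <- holdsbP, E; discriminate); tauto.
  - exists lb_in; split; [apply NoDup_filter, Nb | split; [|reflexivity]].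
    intro x; unfold inter, lb_in; rewrite filter_In, holdsbP, <- Eb; tauto.
Qed.

Lemma finite_of_bounded_lists A (K : nat) :
  (forall l, NoDup l -> (forall x, In x l -> A x) -> (length l <= K)%nat) -> finite_pred A.
Proof.
  intro Hb; apply NNPP; intro NF.
  assert (Long : forall k, exists l, NoDup l /\ (forall x, In x l -> A x) /\ length l = k).
  { induction k as [|k [l [Nl [Il Ll]]]].
    - exists []; repeat split; [constructor | intros x []].
    - assert (exists x, A x /\ ~ In x l) as [x [Ax nx]].
      { apply NNPP; intro C; apply NF; exists l; intro x; split; [|apply Il].
        intro Ax; apply NNPP; intro nx; apply C; eauto. }
      exists (x :: l); repeat split; simpl; [constructor; auto | | lia].
      intros y [<-|Hy]; auto. }
  destruct (Long (S K)) as [l [Nl [Il Ll]]]; specialize (Hb l Nl Il); lia.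
Qed.

End FiniteSets.

Section Images.
Context {T U : Type}.

Definition image (f : T -> U) (A : T -> Prop) : U -> Prop :=
  fun y => exists x, A x /\ y = f x.

Lemma finite_image f A : finite_pred A -> finite_pred (image f A).
Proof.
  intros [l Hl]; exists (map f l); intro y; unfold image; rewrite in_map_iff.
  split; [intros [x [Hx ->]] | intros [x [<- Hx]]]; exists x; split; auto; apply Hl, Hx.
Qed.

Lemma card_image_inj f A : Injective f -> finite_pred A -> card (image f A) = card A.
Proof.
  intros Inj FA; destruct (setcard_card A FA) as [l [Nl [El Ll]]].
  apply card_setcard; exists (map f l); split; [apply Injective_map_NoDup; assumption|].
  split; [|rewrite length_map; assumption].
  intro y; unfold image; rewrite in_map_iff.
  split; [intros [x [Hx ->]] | intros [x [<- Hx]]]; exists x; split; auto; apply El, Hx.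
Qed.

End Images.

Open Scope R_scope.

Lemma nat_least (P : nat -> Prop) :
  (exists n, P n) -> exists n, P n /\ forall m, P m -> (n <= m)%nat.
Proof.
  intro Ex.
  destruct (dec_inh_nat_subset_has_unique_least_element P (fun n => classic (P n)) Ex)
    as [n [[Pn Least] _]].
  exists n; split; assumption.
Qed.

(* [p/q] is taken strictly between [D/k0] and [lam], where [k0] is the least
   [k] with [lam * k > D]; then [p * k <= D * q] forces [k < k0]. *)
Lemma rational_approx_threshold (lam D : R) : 0 < lam -> 0 <= D ->
  exists p q : nat, (0 < p)%nat /\ (0 < q)%nat /\ INR p <= lam * INR q /\
    forall k : nat, INR p * INR k <= D * INR q -> lam * INR k <= D.
Proof.
  intros Hlam HD.
  destruct (nat_least (fun k => lam * INR k > D)) as [k0 [Hk0 Mk0]].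
  { destruct (INR_unbounded (D / lam)) as [k Hk]; exists k.
    apply (Rmult_lt_compat_l lam) in Hk; [field_simplify in Hk|]; lra. }
  assert (Rk0 : 0 < INR k0) by (destruct k0; [simpl in Hk0; lra | apply lt_0_INR; lia]).
  set (a := D / INR k0).
  assert (Ha0 : 0 <= a) by (apply Rdiv_le_0_compat; lra).
  assert (Hal : a < lam).
  { apply Rmult_lt_reg_r with (INR k0); [|unfold a; field_simplify]; lra. }
  destruct (INR_unbounded (1 / (lam - a))) as [q Hq].
  assert (Hq1 : 1 < (lam - a) * INR q).
  { apply (Rmult_lt_compat_l (lam - a)) in Hq; [field_simplify in Hq|]; lra. }
  destruct (nat_least (fun p => a * INR q < INR p)) as [p [Hp Mp]].
  { destruct (INR_unbounded (a * INR q)) as [p Hp]; exists p; exact Hp. }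
  assert (Haq : 0 <= a * INR q) by (apply Rmult_le_pos; [exact Ha0 | apply pos_INR]).
  exists p, q; split; [|split; [|split]].
  - destruct p; [simpl in Hp; lra | lia].
  - destruct q; [simpl in Hq1; lra | lia].
  - destruct p as [|p']; [simpl in Hp; lra|].
    assert (~ a * INR q < INR p') by (intro C; specialize (Mp _ C); lia).
    rewrite S_INR; lra.
  - intros k Hk; apply Rnot_lt_le; intro C.
    assert (INR k0 <= INR k) by (apply le_INR, Mk0; lra).
    assert (Lt : a * INR q * INR k0 < INR p * INR k).
    { apply Rlt_le_trans with (INR p * INR k0);
        [apply Rmult_lt_compat_r | apply Rmult_le_compat_l; [apply pos_INR|]]; assumption. }
    unfold a in Lt; field_simplify in Lt; lra.
Qed.

Lemma rational_approx_below (lam D : R) : 0 < lam -> 0 <= D ->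
  exists p q : nat, (0 < p)%nat /\ (0 < q)%nat /\ INR p <= lam * INR q /\
    forall m n : nat, INR p * INR m <= INR p * INR n + D * INR q ->
      lam * INR m <= lam * INR n + D.
Proof.
  intros Hlam HD.
  destruct (rational_approx_threshold lam D Hlam HD) as [p [q [Hp [Hq [Hpq Threshold]]]]].
  exists p, q; split; [exact Hp | split; [exact Hq | split; [exact Hpq|]]].
  intros m n Hmn; destruct (le_lt_dec m n) as [Le|Lt].
  - apply le_INR in Le; nra.
  - pose proof (Threshold (m - n)%nat) as Hk; rewrite minus_INR in Hk by lia.
    assert (lam * (INR m - INR n) <= D) by (apply Hk; lra); lra.
Qed.

Section Groups.
Context {G X : Type} (mul : G -> G -> G) (one : G) (inv : G -> G) (act : G -> X -> X)
  (HG : is_group mul one inv).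

Lemma inv_inv a : inv (inv a) = a.
Proof.
  destruct HG as [Assoc [Mul1 [Mul1r [MulV _]]]].
  rewrite <- (Mul1r (inv (inv a))), <- (MulV a), Assoc, MulV, Mul1; reflexivity.
Qed.

Lemma mul_left_inj g : Injective (mul g).
Proof.
  destruct HG as [Assoc [Mul1 [_ [MulV _]]]]; intros x y E.
  rewrite <- (Mul1 x), <- (Mul1 y), <- (MulV g), <- !Assoc, E; reflexivity.
Qed.

Lemma subgroup_of_div_closed (H : G -> Prop) :
  H one -> (forall h z, H h -> H z -> H (mul (inv h) z)) -> is_subgroup mul one inv H.
Proof.
  destruct HG as [_ [_ [Mul1r _]]]; intros H1 Hdiv.
  assert (Hinv : forall u, H u -> H (inv u)) by (intros u Hu; rewrite <- Mul1r; auto).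
  split; [assumption | split; [|assumption]].
  intros u v Hu Hv; rewrite <- (inv_inv u); auto.
Qed.

Hypothesis Hact : is_action mul one act.

Lemma act_inj g : Injective (act g).
Proof.
  destruct HG as [_ [_ [_ [MulV _]]]]; destruct Hact as [Act1 ActM]; intros x y E.
  rewrite <- (Act1 x), <- (Act1 y), <- (MulV g), !ActM, E; reflexivity.
Qed.

End Groups.

Section SetAction.
Context {G X : Type} (act : G -> X -> X).
Implicit Types (A B : G -> Prop) (Y : X -> Prop).

Lemma setact_mono A B Y : (forall g, A g -> B g) ->
  forall x, setact act A Y x -> setact act B Y x.
Proof. intros S x [a [y [Aa [Yy E]]]]; exists a, y; auto. Qed.

Lemma finite_setact A Y : finite_pred A -> finite_pred Y -> finite_pred (setact act A Y).
Proof.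
  intros [la Ha] [ly Hy]; exists (flat_map (fun a => map (act a) ly) la); intro x.
  rewrite in_flat_map; split.
  - intros [a [y [Aa [Yy ->]]]]; exists a; split; [apply Ha, Aa|].
    apply in_map, Hy, Yy.
  - intros [a [Ia Im]]; apply in_map_iff in Im as [y [<- Iy]].
    exists a, y; repeat split; [apply Ha, Ia | apply Hy, Iy].
Qed.

Lemma setact_union A B Y :
  same_set (setact act (union A B) Y) (union (setact act A Y) (setact act B Y)).
Proof.
  intro x; unfold union, setact; split.
  - intros [a [y [[Aa|Ba] [Yy E]]]]; [left|right]; exists a, y; auto.
  - intros [[a [y [Aa [Yy E]]]]|[a [y [Ba [Yy E]]]]]; exists a, y; auto.
Qed.

Lemma setact_inter A B Y x :
  setact act (inter A B) Y x -> inter (setact act A Y) (setact act B Y) x.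
Proof. intros [a [y [[Aa Ba] [Yy E]]]]; split; exists a, y; auto. Qed.

Lemma card_setact_submodular A B Y :
  finite_pred A -> finite_pred B -> finite_pred Y ->
  (card (setact act (union A B) Y) + card (setact act (inter A B) Y)
     <= card (setact act A Y) + card (setact act B Y))%nat.
Proof.
  intros FA FB FY.
  assert (FAY : finite_pred (setact act A Y)) by (apply finite_setact; assumption).
  assert (FBY : finite_pred (setact act B Y)) by (apply finite_setact; assumption).
  rewrite <- (card_union_inter _ _ FAY FBY).
  apply Nat.add_le_mono.
  - rewrite (card_ext _ _ (setact_union A B Y)); [lia | apply finite_setact; auto].
    apply finite_union; assumption.
  - apply card_subset_le; [|apply setact_inter].
    apply (finite_subset _ _ FAY); intros x []; assumption.
Qed.

Context (mul : G -> G -> G) (one : G) (inv : G -> G)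
  (HG : is_group mul one inv) (Hact : is_action mul one act).

Lemma setact_translate g A Y :
  same_set (setact act (image (mul g) A) Y) (image (act g) (setact act A Y)).
Proof.
  destruct Hact as [_ ActM]; intro x; split.
  - intros [a [y [[b [Ab ->]] [Yy ->]]]].
    exists (act b y); split; [exists b, y; auto | apply ActM].
  - intros [z [[b [y [Ab [Yy ->]]]] ->]].
    exists (mul g b), y; repeat split; [exists b; auto | assumption | symmetry; apply ActM].
Qed.

Lemma card_setact_translate g A Y : finite_pred A -> finite_pred Y ->
  card (setact act (image (mul g) A) Y) = card (setact act A Y).
Proof.
  intros FA FY.
  rewrite <- (card_image_inj (act g) (setact act A Y) (act_inj mul one inv act HG Hact g))
    by (apply finite_setact; assumption).
  apply card_ext; [apply setact_translate | apply finite_setact; [apply finite_image|]; assumption].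
Qed.

Lemma card_le_setact A Y : nonempty A -> finite_pred A -> finite_pred Y ->
  (card Y <= card (setact act A Y))%nat.
Proof.
  intros [a Aa] FA FY.
  rewrite <- (card_image_inj (act a) Y (act_inj mul one inv act HG Hact a) FY).
  apply card_subset_le; [apply finite_setact; assumption|].
  intros x [y [Yy ->]]; exists a, y; auto.
Qed.

End SetAction.

Section Isoperimetry.
Context {G X : Type} (mul : G -> G -> G) (one : G) (inv : G -> G) (act : G -> X -> X)
  (HG : is_group mul one inv) (Hact : is_action mul one act)
  (Y : X -> Prop) (HYfin : finite_pred Y).

Section Fragments.
Variables p q kappa : nat.

Hypothesis kappa_le : forall A, finite_pred A -> nonempty A ->
  (p * card A + kappa <= q * card (setact act A Y))%nat.

Definition fragment (F : G -> Prop) : Prop :=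
  finite_pred F /\ nonempty F /\ (q * card (setact act F Y) = p * card F + kappa)%nat.

Definition atom (F : G -> Prop) : Prop :=
  fragment F /\ forall F', fragment F' -> (card F <= card F')%nat.

Lemma card_translate g F : finite_pred F -> card (image (mul g) F) = card F.
Proof. apply card_image_inj, (mul_left_inj mul one inv HG). Qed.

Lemma fragment_translate g F : fragment F -> fragment (image (mul g) F).
Proof.
  intros [FF [[x Fx] EF]]; split; [apply finite_image, FF | split].
  - exists (mul g x), x; auto.
  - rewrite (card_setact_translate act mul one inv HG Hact), card_translate; assumption.
Qed.

Lemma atom_translate g F : atom F -> atom (image (mul g) F).
Proof.
  intros [FrF Least]; split; [apply fragment_translate, FrF|].
  rewrite card_translate; [exact Least | apply FrF].
Qed.

Lemma fragment_inter F1 F2 : fragment F1 -> fragment F2 ->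
  nonempty (inter F1 F2) -> fragment (inter F1 F2).
Proof.
  intros [FF1 [[x1 F1x] E1]] [FF2 [N2 E2]] NI.
  assert (FI : finite_pred (inter F1 F2)) by (apply (finite_subset _ F1 FF1); intros x []; auto).
  assert (FU : finite_pred (union F1 F2)) by (apply finite_union; assumption).
  assert (NU : nonempty (union F1 F2)) by (exists x1; left; exact F1x).
  pose proof (kappa_le _ FI NI) as KI.
  pose proof (kappa_le _ FU NU) as KU.
  pose proof (card_union_inter _ _ FF1 FF2) as Incl_excl.
  pose proof (card_setact_submodular act _ _ Y FF1 FF2 HYfin) as Submod.
  split; [exact FI | split; [exact NI | nia]].
Qed.

Lemma atom_subset F1 F2 x : atom F1 -> fragment F2 -> F1 x -> F2 x ->
  forall z, F1 z -> F2 z.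
Proof.
  intros [FrF1 Least] FrF2 F1x F2x.
  assert (FrI : fragment (inter F1 F2)) by (apply fragment_inter; [| |exists x; split]; auto).
  intros z F1z; apply (subset_of_card_le (inter F1 F2) F1) in F1z as [_ F2z]; auto.
  - apply FrF1.
  - intros y []; assumption.
Qed.

Lemma atom_subgroup H : atom H -> H one -> is_subgroup mul one inv H.
Proof.
  intros AtH H1; apply (subgroup_of_div_closed mul one inv HG H H1).
  intros h z Hh Hz; pose proof HG as [_ [_ [_ [MulV _]]]].
  apply (atom_subset (image (mul (inv h)) H) H one).
  - apply atom_translate, AtH.
  - apply AtH.
  - exists h; auto.
  - exact H1.
  - exists z; auto.
Qed.

Lemma exists_atom_one : (exists F, fragment F) -> exists H, atom H /\ H one.
Proof.
  intro ExF; pose proof HG as [_ [_ [_ [MulV _]]]].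
  destruct (nat_least (fun n => exists F, fragment F /\ card F = n)) as [a [[F [FrF <-]] Least]].
  { destruct ExF as [F FrF]; exists (card F), F; auto. }
  assert (AtF : atom F) by (split; [exact FrF | intros F' FrF'; apply Least; exists F'; auto]).
  destruct FrF as [_ [[x0 Fx0] _]].
  exists (image (mul (inv x0)) F); split; [apply atom_translate, AtF | exists x0; auto].
Qed.

Lemma fragment_stable g H : (0 < p)%nat -> fragment H -> H one ->
  (forall y, Y y -> Y (act g y)) -> H g.
Proof.
  intros Hp [FH [NH EH]] H1 gY; pose proof Hact as [_ ActM]; pose proof HG as [_ [Mul1 _]].
  set (U := union H (image (fun h => mul h g) H)).
  assert (FU : finite_pred U) by (apply finite_union, finite_image; assumption).
  assert (UY : card (setact act U Y) = card (setact act H Y)).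
  { apply card_ext; [|apply finite_setact; assumption]. intro x; split.
    - intros [u [y [[Hu|[h [Hh ->]]] [Yy ->]]]].
      + exists u, y; auto.
      + exists h, (act g y); rewrite ActM; auto.
    - apply setact_mono; intros u Hu; left; exact Hu. }
  pose proof (kappa_le U FU (ltac:(exists one; left; exact H1))) as KU.
  assert (Le : (card U <= card H)%nat) by nia.
  apply (subset_of_card_le H U FU (fun u Hu => or_introl Hu) Le g).
  right; exists one; auto.
Qed.

Lemma fragment_bound H A : fragment H -> finite_pred A -> nonempty A ->
  (p * card A + q * card Y <= q * card (setact act A Y) + p * card H)%nat.
Proof.
  intros [FH [NH EH]] FA NA.
  pose proof (kappa_le A FA NA).
  pose proof (card_le_setact act mul one inv HG Hact H Y NH FH HYfin).
  nia.
Qed.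

End Fragments.

Lemma isoperimetric_subgroup (p q : nat) : (0 < p)%nat ->
  (forall A : G -> Prop, finite_pred A -> nonempty A ->
     (p * card A <= q * card (setact act A Y))%nat) ->
  (exists A : G -> Prop, finite_pred A /\ nonempty A) ->
  exists H, is_subgroup mul one inv H /\ finite_pred H /\
    (forall g, (forall y, Y y -> Y (act g y)) -> H g) /\
    forall A, finite_pred A -> nonempty A ->
      (p * card A + q * card Y <= q * card (setact act A Y) + p * card H)%nat.
Proof.
  intros Hp Hratio [A0 [FA0 NA0]].
  destruct (nat_least (fun k => exists A, finite_pred A /\ nonempty A /\
              (q * card (setact act A Y) = p * card A + k)%nat)) as [kappa [ExF Least]].
  { exists (q * card (setact act A0 Y) - p * card A0)%nat, A0.
    specialize (Hratio A0 FA0 NA0); repeat split; auto; lia. }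
  assert (kappa_le : forall A, finite_pred A -> nonempty A ->
            (p * card A + kappa <= q * card (setact act A Y))%nat).
  { intros A FA NA; specialize (Hratio A FA NA).
    enough (kappa <= q * card (setact act A Y) - p * card A)%nat by lia.
    apply Least; exists A; repeat split; auto; lia. }
  destruct (exists_atom_one p q kappa ExF) as [H [AtH H1]].
  exists H; split; [|split; [|split]].
  - apply (atom_subgroup p q kappa kappa_le H AtH H1).
  - apply AtH.
  - intros g gY; apply (fragment_stable p q kappa kappa_le g H Hp); [apply AtH | exact H1 | exact gY].
  - intros A; apply (fragment_bound p q kappa kappa_le H A), AtH.
Qed.

End Isoperimetry.

Section RealRatio.
Context {G X : Type} (act : G -> X -> X) (Y : X -> Prop) (lam : R).

Lemma lam_card_le_card_setact : finite_pred Y -> Rbar_le (Finite lam) (mu_inf act Y) ->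
  forall A, finite_pred A -> nonempty A -> lam * INR (card A) <= INR (card (setact act A Y)).
Proof.
  intros FY Hlam A FA NA.
  assert (Pos : 0 < INR (card A)) by (apply lt_0_INR, card_nonempty_pos; assumption).
  assert (Ratio : Rbar_le (Finite lam) (INR (card (setact act A Y)) / INR (card A))).
  { apply (Rbar_le_trans _ _ _ Hlam), (proj1 (Glb_Rbar_correct _)).
    exists A, (card A), (card (setact act A Y)); repeat split;
      [exact NA | apply setcard_card, FA | apply setcard_card, finite_setact; assumption]. }
  simpl in Ratio; apply (Rmult_le_compat_r (INR (card A))) in Ratio; [|lra].
  field_simplify in Ratio; lra.
Qed.

Lemma finite_of_finite_setact A B : 0 < lam ->
  (forall L, finite_pred L -> nonempty L -> lam * INR (card L) <= INR (card (setact act L Y))) ->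
  finite_pred B -> (forall x, setact act A Y x -> B x) -> finite_pred A.
Proof.
  intros Hlam Hratio FB AYB.
  destruct (INR_unbounded (INR (card B) / lam)) as [K HK].
  apply (finite_of_bounded_lists A K); intros l Nl Il.
  destruct l as [|x l']; [simpl; lia|].
  set (L := fun g => In g (x :: l')).
  assert (FL : finite_pred L) by (exists (x :: l'); intro; reflexivity).
  assert (CL : card L = length (x :: l')) by (apply card_setcard; exists (x :: l'); repeat split; auto).
  assert (LB : (card (setact act L Y) <= card B)%nat).
  { apply card_subset_le; [exact FB|]; intros z Z; apply AYB, (setact_mono act L); [exact Il | exact Z]. }
  specialize (Hratio L FL (ltac:(exists x; left; reflexivity))).
  apply le_INR in LB; rewrite CL in Hratio.
  enough (Lt : INR (length (x :: l')) < INR K) by (apply INR_lt in Lt; lia).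
  apply Rle_lt_trans with (INR (card B) / lam); [|exact HK].
  apply Rmult_le_reg_l with lam; [exact Hlam | field_simplify; lra].
Qed.

End RealRatio.

Theorem mainTheorem9
  (G X : Type) (mul : G -> G -> G) (one : G) (inv : G -> G) (act : G -> X -> X)
  (HG : is_group mul one inv) (Hact : is_action mul one act)
  (Y : X -> Prop) (HYfin : finite_pred Y)
  (Hmu : Rbar_lt (Finite 0) (mu_inf act Y))
  (lam : R) (Hlam0 : 0 < lam) (Hlammu : Rbar_le (Finite lam) (mu_inf act Y))
  (A0 : G -> Prop) (HA0fin : finite_pred A0) (HA0ne : nonempty A0)
  (nY nA0Y : nat) (HnY : setcard Y nY) (HnA0Y : setcard (setact act A0 Y) nA0Y) :
  exists (H : G -> Prop) (h : nat),
    is_subgroup mul one inv H /\ setcard H h /\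
    (forall g, setstab act Y g -> H g) /\
    (forall A : G -> Prop, same_set (setact act A Y) (setact act A0 Y) ->
       exists n : nat, setcard A n /\
         lam * INR n + INR nY <= lam * INR h + INR nA0Y).
Proof.
  (* [Hmu] is implied by [Hlam0] and [Hlammu]. *)
  pose proof (lam_card_le_card_setact act Y lam HYfin Hlammu) as Hratio.
  pose proof (setcard_finite _ _ HnA0Y) as FA0Y.
  apply card_setcard in HnY, HnA0Y; subst nY nA0Y.
  pose proof (card_le_setact act mul one inv HG Hact A0 Y HA0ne HA0fin HYfin) as YA0Y.
  apply le_INR in YA0Y.
  destruct (rational_approx_below lam (INR (card (setact act A0 Y)) - INR (card Y)) Hlam0)
    as [p [q [Hp [Hq [Hpq Transfer]]]]]; [lra|].
  destruct (isoperimetric_subgroup mul one inv act HG Hact Y HYfin p q Hp)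
    as [H [SubH [FH [StabH BoundH]]]].
  { intros A FA NA; apply INR_le; rewrite !mult_INR.
    pose proof (Rmult_le_compat_r _ _ _ (pos_INR (card A)) Hpq).
    pose proof (Rmult_le_compat_l _ _ _ (pos_INR q) (Hratio A FA NA)); nra. }
  { exists A0; split; assumption. }
  exists H, (card H); split; [exact SubH | split; [apply setcard_card, FH | split]].
  - intros g Sg; apply StabH; intros y Yy; apply Sg; exists g, y; auto.
  - intros A EA.
    assert (FA : finite_pred A).
    { apply (finite_of_finite_setact act Y lam A _ Hlam0 Hratio FA0Y); intro x; apply EA. }
    exists (card A); split; [apply setcard_card, FA|].
    assert (CardAY : card (setact act A Y) = card (setact act A0 Y))
      by (apply card_ext; [exact EA | apply finite_setact; assumption]).
    destruct (Nat.eq_0_gt_0_cases (card A)) as [Empty|Pos].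
    + rewrite Empty; pose proof (pos_INR (card H)); simpl; nra.
    + pose proof (BoundH A FA (card_pos_nonempty A FA Pos)) as Bound.
      rewrite CardAY in Bound; apply le_INR in Bound; rewrite !plus_INR, !mult_INR in Bound.
      enough (lam * INR (card A) <= lam * INR (card H) +
                (INR (card (setact act A0 Y)) - INR (card Y))) by lra.
      apply Transfer; nra.
Qed.
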